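(* Let $n\ge1$ be an integer, $\alpha\ge0$, and let $p(x)=\sum_{j=k}^m c_jx^j$ be a real polynomial with $m\ge k\ge1$ and $c_m,c_k>0$. Define $$f_\alpha(t):=\int_0^\infty x^\alpha e^{-tx^n}\,dx,\qquad g(t):=\int_0^\infty e^{-tp(x)}\,dx.$$ Then there exist constants $C,t_0>0$ depending only on $\alpha$, $n$, $k$ and the coefficients of $p$ such that $$\frac{f_\alpha(t)}{g(t)}\le C\,t^{\frac1k-\frac{\alpha+1}{n}}\qquad\text{for all } t\ge t_0.$$ *)

From HB Require Import structures.
From mathcomp Require Import all_boot all_order all_algebra.
From mathcomp Require Import all_classical all_reals all_analysis.
Set Implicit Arguments. Unset Strict Implicit. Unset Printing Implicit Defensive.
Import Order.TTheory GRing.Theory Num.Theory.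
Local Open Scope ring_scope.
Local Open Scope classical_set_scope.

Definition polyfun (R : realType) (k m : nat) (c : nat -> R) (x : R) : R :=
  \sum_(k <= j < m.+1) c j * x ^+ j.

Definition f_alpha (R : realType) (n : nat) (alpha t : R) : R :=
  Rintegral (@lebesgue_measure R) `[0%R, +oo[
    (fun x => x `^ alpha * expR (- (t * x ^+ n))).

Definition g_int (R : realType) (k m : nat) (c : nat -> R) (t : R) : R :=
  Rintegral (@lebesgue_measure R) `[0%R, +oo[
    (fun x => expR (- (t * polyfun k m c x))).

From HB Require Import structures.
From mathcomp Require Import all_boot all_order all_algebra.
From mathcomp Require Import all_classical all_reals all_analysis.
From mathcomp Require Import measurable_realfun ring lra.
Set Implicit Arguments. Unset Strict Implicit. Unset Printing Implicit Defensive.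
Import Order.TTheory GRing.Theory Num.Theory.
Local Open Scope ring_scope.
Local Open Scope classical_set_scope.

(* The substitution x = t^(-1/n) y gives f_alpha(t) = t^(-(alpha+1)/n) f_alpha(1),
   while for t >= 1 and 0 <= x <= t^(-1/k) <= 1 we have t p(x) <= sum_j |c_j|,
   so that g(t) >= exp(-sum_j |c_j|) t^(-1/k).  Dividing the two gives the
   bound with C = (f_alpha(1) + 1) exp(sum_j |c_j|) and t0 = 1; the signs of
   alpha and of the coefficients play no role in this upper bound. *)

Section dilation.
Context {R : realType}.
Local Notation mu := (@lebesgue_measure R).

Lemma lebesgue_measure_dilation (s : R) (s0 : 0 < s) (A : set R) :
  measurable A -> mu A = (s%:E * mu (( *%R s) @^-1` A))%E.
Proof.
have ms : measurable_fun [set: measurableTypeR R]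
    ( *%R s : measurableTypeR R -> measurableTypeR R).
  exact: measurable_realfun.measurable_funM.
pose m := mscale (NngNum (ltW s0))
  (measure_function_pushforward__canonical__measure_function_Measure mu ms).
apply: (@lebesgue_measure_unique _ m) => X /ocitvP [->|[[a b]/= ab ->]].
  by rewrite !measure0.
rewrite /m /mscale /= /pushforward /=.
have -> : ( *%R s) @^-1` `]a, b] = `]a / s, b / s].
  by apply/seteqP; split => x /=;
    rewrite !in_itv /= ltr_pdivrMr// ler_pdivlMr// [x * s]mulrC.
rewrite (lebesgue_measure_itv `]a, b]%R) (lebesgue_measure_itv `](a/s), (b/s)]%R).
rewrite /= !lte_fin ltr_pM2r ?invr_gt0// ab -EFinD -EFinM -mulrBl.
by rewrite mulrCA divff ?gt_eqF// mulr1.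
Qed.

Lemma ge0_integral_dilation (s : R) (s0 : 0 < s) (f : R -> \bar R) :
  measurable_fun [set: R] f -> (forall x, (0 <= f x)%E) ->
  (\int[mu]_(x in `[0%R, +oo[) f x
   = s%:E * \int[mu]_(x in `[0%R, +oo[) f (s * x)%R)%E.
Proof.
move=> mf f0.
have ms : measurable_fun [set: measurableTypeR R]
    ( *%R s : measurableTypeR R -> measurableTypeR R).
  exact: measurable_realfun.measurable_funM.
pose m := mscale (NngNum (ltW s0))
  (measure_function_pushforward__canonical__measure_function_Measure mu ms).
rewrite (eq_measure_integral m); last first.
  by move=> A mA _; exact: lebesgue_measure_dilation.
rewrite ge0_integral_mscale //=; last exact: measurable_funTS mf.
rewrite ge0_integral_pushforward //=; last exact: measurable_funTS mf.
congr (_ * integral _ _ _)%E.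
by apply/seteqP; split => x /=; rewrite !in_itv /= !andbT pmulr_rge0.
Qed.

Lemma fineM_gt0l (r : R) (x : \bar R) : 0 < r -> fine (r%:E * x)%E = r * fine x.
Proof.
move=> r0; case: x => [x| |] //=.
- by rewrite muleC gt0_mulye ?lte_fin// mulr0.
- by rewrite muleC gt0_mulNye ?lte_fin// mulr0.
Qed.

Lemma expr_powR_invn (x : R) (n : nat) : 0 <= x -> (0 < n)%N ->
  (x `^ n%:R^-1) ^+ n = x.
Proof.
move=> x0 n0; rewrite -powR_mulrn ?powR_ge0// -powRrM mulVf ?powRr1//.
by rewrite pnatr_eq0 -lt0n.
Qed.

Lemma measurable_f_alpha_integrand (a t : R) (n : nat) :
  measurable_fun [set: R] (fun x : R => (x `^ a * expR (- (t * x ^+ n)))%:E).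
Proof.
apply/measurable_EFinP; apply: measurable_realfun.measurable_funM.
  exact: measurable_powR.
apply: measurableT_comp; first exact: measurable_expR.
apply: measurableT_comp => //; apply: measurable_realfun.measurable_funM.
  exact: measurable_cst.
exact: measurable_funX.
Qed.

Lemma f_alpha_dilation (n : nat) (a t : R) : (0 < n)%N -> 0 < t ->
  f_alpha n a t = t `^ (- ((a + 1) / n%:R)) * f_alpha n a 1.
Proof.
move=> n0 t0; set s := t `^ (- n%:R^-1).
have s0 : 0 < s by exact: powR_gt0.
have sn : s ^+ n = t^-1 by rewrite /s powRN exprVn expr_powR_invn ?ltW.
rewrite /f_alpha /Rintegral.
rewrite (ge0_integral_dilation s0 (measurable_f_alpha_integrand a t n)); last first.
  by move=> x; rewrite lee_fin mulr_ge0 ?powR_ge0 ?expR_ge0.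
have -> : (\int[mu]_(x in `[0%R, +oo[)
      ((s * x) `^ a * expR (- (t * (s * x) ^+ n)))%:E
    = \int[mu]_(x in `[0%R, +oo[)
      ((s `^ a)%:E * (x `^ a * expR (- (1 * x ^+ n)))%:E))%E.
  apply: eq_integral => x; rewrite inE /= in_itv /= andbT => x0.
  by rewrite powRM ?(ltW s0)// exprMn mulrA sn mulfV ?gt_eqF// -EFinM mulrA.
rewrite ge0_integralZl_EFin ?powR_ge0//; last 2 first.
- by move=> x _; rewrite lee_fin mulr_ge0 ?powR_ge0 ?expR_ge0.
- exact: measurable_funTS (measurable_f_alpha_integrand a 1 n).
rewrite muleA -EFinM fineM_gt0l ?mulr_gt0 ?powR_gt0//; congr (_ * _).
rewrite -{1}(powRr1 (ltW s0)) -powRD; last by rewrite (gt_eqF s0) implybT.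
by rewrite /s -powRrM mulNr mulrC addrC.
Qed.

End dilation.

Definition abs_coef_sum (R : realType) (k m : nat) (c : nat -> R) : R :=
  \sum_(k <= j < m.+1) `|c j|.

Section polyfun_lower_bound.
Context {R : realType} (k m : nat) (c : nat -> R).
Hypothesis k_gt0 : (0 < k)%N.
Local Notation mu := (@lebesgue_measure R).
Local Notation A := (abs_coef_sum k m c).

Lemma polyfun_le_abs_coef_sum (x : R) : 0 <= x -> x <= 1 ->
  polyfun k m c x <= A * x ^+ k.
Proof.
move=> x0 x1; rewrite /polyfun /abs_coef_sum big_distrl !big_nat /=.
apply: ler_sum => j /andP[kj _]; apply: (le_trans (ler_norm _)).
rewrite normrM (ger0_norm (exprn_ge0 _ x0)) ler_wpM2l//.
exact: ler_wiXn2l.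
Qed.

Lemma mul_polyfun_le_abs_coef_sum (t x : R) : 1 <= t ->
  0 <= x -> x <= t `^ (- k%:R^-1) -> t * polyfun k m c x <= A.
Proof.
move=> t1 x0 xd; have t0 : 0 < t by apply: lt_le_trans t1.
set d := t `^ (- k%:R^-1) in xd.
have A0 : 0 <= A by apply: sumr_ge0.
have d1 : d <= 1 by rewrite -(powRr0 t) ler_powR// oppr_le0 invr_ge0.
have dk : d ^+ k = t^-1 by rewrite /d powRN exprVn expr_powR_invn ?ltW.
apply: (@le_trans _ _ (t * (A * d ^+ k))).
  rewrite ler_wpM2l ?(ltW t0)//; apply: (le_trans (polyfun_le_abs_coef_sum x0 _)).
    exact: le_trans d1.
  by rewrite ler_wpM2l// lerXn2r// nnegrE (le_trans x0).
by rewrite dk mulrCA mulfV ?gt_eqF// mulr1.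
Qed.

Lemma measurable_g_int_integrand (t : R) :
  measurable_fun [set: R] (fun x : R => (expR (- (t * polyfun k m c x)))%:E).
Proof.
apply/measurable_EFinP; apply: measurableT_comp; first exact: measurable_expR.
apply: measurableT_comp => //; apply: measurable_realfun.measurable_funM.
  exact: measurable_cst.
apply: measurable_sum => j; apply: measurable_realfun.measurable_funM.
  exact: measurable_cst.
exact: measurable_funX.
Qed.

Lemma integral_exp_polyfun_ge (t : R) : 1 <= t ->
  ((expR (- A) * t `^ (- k%:R^-1))%:E
   <= \int[mu]_(x in `[0%R, +oo[) (expR (- (t * polyfun k m c x)))%:E)%E.
Proof.
move=> t1; have t0 : 0 < t by apply: lt_le_trans t1.
set d := t `^ (- k%:R^-1).
have d0 : 0 < d by exact: powR_gt0.
have mg := measurable_g_int_integrand t.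
apply: (@le_trans _ _
  (\int[mu]_(x in `[0%R, d]) (expR (- (t * polyfun k m c x)))%:E)%E); last first.
  apply: ge0_subset_integral => //; first exact: measurable_funTS mg.
  by apply: subset_itvl; rewrite bnd_simp.
apply: (@le_trans _ _ (\int[mu]_(x in `[0%R, d]) (expR (- A))%:E)%E).
  have mu_d := lebesgue_measure_itv `[0%R, d]%R.
  rewrite /= lte_fin d0 oppr0 adde0 in mu_d.
  rewrite integral_cst// EFinM; set M := (X in (_ <= _ * X)%E).
  by have -> : M = d%:E by exact: mu_d.
apply: ge0_le_integral => //; first exact: measurable_funTS mg.
move=> x; rewrite /= in_itv /= => /andP[x0 xd].
by rewrite lee_fin ler_expR lerN2 mul_polyfun_le_abs_coef_sum.
Qed.

Lemma g_int_ge (t : R) : 1 <= t -> g_int k m c t != 0 ->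
  expR (- A) * t `^ (- k%:R^-1) <= g_int k m c t.
Proof.
rewrite /g_int /Rintegral => t1; set J := (\int[_]_(x in _) _)%E => J0.
have J_fin : J \is a fin_num by move: J0; case: (J) => //=; rewrite eqxx.
by rewrite -lee_fin fineK// integral_exp_polyfun_ge.
Qed.

End polyfun_lower_bound.

Theorem lemma4p12 (R : realType) (n : nat) (alpha : R) (k m : nat) (c : nat -> R)
  (hn : (1 <= n)%N) (halpha : 0 <= alpha) (hk : (1 <= k)%N) (hkm : (k <= m)%N)
  (hcm : 0 < c m) (hck : 0 < c k) :
  exists C t0 : R, 0 < C /\ 0 < t0 /\
    forall t : R, t0 <= t ->
      f_alpha n alpha t / g_int k m c t
        <= C * t `^ (k%:R^-1 - (alpha + 1) / n%:R).
Proof.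
set A := abs_coef_sum k m c; set F1 := f_alpha n alpha 1.
have F1_ge0 : 0 <= F1.
  by apply: fine_ge0; apply: integral_ge0 => x _;
    rewrite lee_fin mulr_ge0 ?powR_ge0 ?expR_ge0.
exists ((F1 + 1) * expR A), 1; split; first by rewrite mulr_gt0 ?expR_gt0//; lra.
split=> // t t1; have t0 : 0 < t by apply: lt_le_trans t1.
set e := (alpha + 1) / n%:R.
have bound_ge0 : 0 <= (F1 + 1) * expR A * t `^ (k%:R^-1 - e).
  by rewrite !mulr_ge0 ?expR_ge0 ?powR_ge0//; lra.
(* [g_int] vanishes only as the junk value [fine +oo], and then so does the quotient. *)
have [->|g_neq0] := eqVneq (g_int k m c t) 0; first by rewrite invr0 mulr0.
set L := expR (- A) * t `^ (- k%:R^-1).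
have L_gt0 : 0 < L by rewrite mulr_gt0 ?expR_gt0 ?powR_gt0.
have g_geL : L <= g_int k m c t by exact: g_int_ge.
rewrite f_alpha_dilation //.
apply: (@le_trans _ _ (t `^ (- e) * F1 / L)).
  by rewrite ler_wpM2l ?mulr_ge0 ?powR_ge0// lef_pV2 ?posrE// (lt_le_trans L_gt0).
have -> : t `^ (- e) * F1 / L = F1 * expR A * t `^ (k%:R^-1 - e).
  rewrite powRB; last by rewrite (gt_eqF t0) implybT.
  rewrite /L !powRN expRN; field.
  by rewrite !gt_eqF ?expR_gt0 ?powR_gt0.
by rewrite ler_wpM2r ?powR_ge0// ler_wpM2r ?expR_ge0//; lra.
Qed.
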